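(* Let $G$ be a simple graph on $n$ vertices with at least one edge that is both vertex-transitive and edge-transitive, and suppose $\alpha(G)\,\omega(G)=n$. Then $G$ is $k$-regular for some $k$ and $$\lambda(G)=-\frac{k}{\omega(G)-1}.$$
   Context: $\lambda(G)$ is the smallest adjacency eigenvalue, $\alpha(G)$ the independence number and $\omega(G)$ the clique number of $G$. *)

From HB Require Import structures.
From mathcomp Require Import all_boot all_order all_algebra all_fingroup all_field.
Set Implicit Arguments. Unset Strict Implicit. Unset Printing Implicit Defensive.
Import Order.TTheory GRing.Theory Num.Theory.

Definition simple_graph (n : nat) (e : rel 'I_n) : Prop :=
  symmetric e /\ irreflexive e.

Definition has_edge (n : nat) (e : rel 'I_n) : Prop := exists x y, e x y.

Definition is_aut (n : nat) (e : rel 'I_n) (s : {perm 'I_n}) : Prop :=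
  forall x y, e (s x) (s y) = e x y.

Definition vertex_transitive (n : nat) (e : rel 'I_n) : Prop :=
  forall x y, exists s : {perm 'I_n}, is_aut e s /\ s x = y.

Definition edge_transitive (n : nat) (e : rel 'I_n) : Prop :=
  forall x y u v, e x y -> e u v ->
    exists s : {perm 'I_n}, is_aut e s /\
      ((s x = u /\ s y = v) \/ (s x = v /\ s y = u)).

Definition independent (n : nat) (e : rel 'I_n) (S : {set 'I_n}) : bool :=
  [forall x in S, forall y in S, ~~ e x y].

Definition clique (n : nat) (e : rel 'I_n) (S : {set 'I_n}) : bool :=
  [forall x in S, forall y in S, (x != y) ==> e x y].

Definition alpha (n : nat) (e : rel 'I_n) : nat :=
  \max_(S : {set 'I_n} | independent e S) #|S|.

Definition omega (n : nat) (e : rel 'I_n) : nat :=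
  \max_(S : {set 'I_n} | clique e S) #|S|.

Definition regular (n : nat) (e : rel 'I_n) (k : nat) : Prop :=
  forall x, #|[set y | e x y]| = k.

Definition adj_mx (n : nat) (e : rel 'I_n) : 'M[algC]_n :=
  \matrix_(i, j) ((e i j)%:R)%R.

Definition smallest_eigenvalue (n : nat) (A : 'M[algC]_n) (l : algC) : Prop :=
  eigenvalue A l /\ (forall m, eigenvalue A m -> (l <= m)%R).

From mathcomp Require Import all_boot all_order all_algebra all_fingroup all_field.
From mathcomp Require Import ring.
Set Implicit Arguments. Unset Strict Implicit. Unset Printing Implicit Defensive.
Import Order.TTheory GRing.Theory Num.Theory.

(* Fix a maximum clique C and a maximum independent set I, and let N x y count
   the automorphisms g with g x and g y in C.  N is the Gram matrix of the
   indicator vectors of the sets g^-1 C, hence positive semidefinite, and by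
   vertex and edge transitivity N = d I + c A with c > 0; so every eigenvalue of
   A is at least -d/c.  Row sums of N give d omega = d + k c.  Finally
   alpha omega = n forces every g^-1 C to meet I in exactly one vertex, so
   omega 1_I - 1 is orthogonal to all these indicators: it lies in the kernel
   of N and is an eigenvector of A for -d/c. *)

Section HermitianForm.
Variable n : nat.
Local Open Scope ring_scope.
Implicit Types (A M : 'M[algC]_n) (v x : 'rV[algC]_n).

Definition herm_form M v : algC := (v *m M *m (map_mx Num.conj v)^T) 0 0.

Lemma herm_form_sum (I : Type) (r : seq I) (P : pred I) (F : I -> 'M_n) v :
  herm_form (\sum_(i <- r | P i) F i) v = \sum_(i <- r | P i) herm_form (F i) v.
Proof. by rewrite /herm_form mulmx_sumr mulmx_suml summxE. Qed.

Lemma herm_form1_gt0 v : v != 0 -> 0 < herm_form 1%:M v.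
Proof.
move=> nz_v; rewrite /herm_form mulmx1 mxE.
have [j nz_vj] : exists j, v 0 j != 0.
  apply/existsP; apply: contraR nz_v => /existsPn v0.
  by apply/eqP/rowP => j; rewrite mxE; apply/eqP/negPn/v0.
rewrite (bigD1 j) //= ltr_wpDr ?mxE ?mul_conjC_gt0 //.
by apply: sumr_ge0 => i _; rewrite !mxE mul_conjC_ge0.
Qed.

Lemma herm_form_gram_ge0 x v :
  map_mx Num.conj x = x -> 0 <= herm_form (x^T *m x) v.
Proof.
move=> real_x; rewrite /herm_form mulmxA -mulmxA mxE big_ord1.
have real_xj j : (x 0 j)^* = x 0 j by rewrite -[in RHS]real_x mxE.
have -> : (x *m (map_mx Num.conj v)^T) 0 0 = ((v *m x^T) 0 0)^*.
  rewrite !mxE rmorph_sum; apply: eq_bigr => j _.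
  by rewrite !mxE rmorphM /= real_xj mulrC.
exact: mul_conjC_ge0.
Qed.

Lemma herm_form_eigen A v m : v *m A = m *: v -> herm_form A v = m * herm_form 1%:M v.
Proof. by move=> vA; rewrite /herm_form vA mulmx1 -scalemxAl mxE. Qed.

Lemma eigenvalue_ge_psd A d c m :
  0 < c -> (forall v, 0 <= herm_form (d%:M + c *: A) v) ->
  eigenvalue A m -> - d / c <= m.
Proof.
move=> c_gt0 psd /eigenvalueP[v vA nz_v].
have vdcA : v *m (d%:M + c *: A) = (d + c * m) *: v.
  by rewrite mulmxDr scalar_mxC mul_scalar_mx -scalemxAr vA scalerA scalerDl.
have := psd v; rewrite (herm_form_eigen vdcA) (pmulr_lge0 _ (herm_form1_gt0 nz_v)).
move=> dcm_ge0; rewrite -subr_ge0.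
have -> : m - - d / c = (d + c * m) / c by field; rewrite gt_eqF.
by rewrite divr_ge0 // ltW.
Qed.

Lemma eigenvalue_of_kernel A d c (w : 'rV_n) :
  c != 0 -> w != 0 -> w *m (d%:M + c *: A) = 0 -> eigenvalue A (- d / c).
Proof.
move=> nz_c nz_w wdcA; apply/eigenvalueP; exists w => //.
apply: (scalerI nz_c); move/eqP: wdcA.
rewrite mulmxDr scalar_mxC mul_scalar_mx -scalemxAr addr_eq0 => /eqP dw.
by rewrite scalerA mulrC divfK // scaleNr dw opprK.
Qed.

End HermitianForm.

Lemma bigmax_card_attained (T : finType) (P : pred {set T}) :
  P set0 -> exists2 S, P S & \max_(S | P S) #|S| = #|S|.
Proof.
move=> P0; rewrite (bigop.bigmax_eq_arg set0) //.
by case: arg_maxnP => // S PS _; exists S.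
Qed.

Lemma sum_nat_mem (T : finType) (A : {pred T}) : \sum_x ((x \in A) : nat) = #|A|.
Proof. by rewrite -sum1_card [RHS]big_mkcond; apply: eq_bigr => x _; case: (x \in A). Qed.

Section GraphAutomorphisms.
Variables (n : nat) (e : rel 'I_n).

Definition graph_aut : {set {perm 'I_n}} :=
  [set s : {perm 'I_n} | [forall x, forall y, e (s x) (s y) == e x y]].

Lemma graph_autP s : reflect (is_aut e s) (s \in graph_aut).
Proof.
rewrite inE; apply: (iffP forallP) => [H x y|H x]; first exact/eqP/(forallP (H x) y).
by apply/forallP => y; rewrite H.
Qed.

Lemma graph_autE s x y : s \in graph_aut -> e (s x) (s y) = e x y.
Proof. by move/graph_autP. Qed.

Fact graph_aut_group_set : group_set graph_aut.
Proof.
apply/group_setP; split => [|s t As At]; apply/graph_autP => x y.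
  by rewrite !perm1.
by rewrite !permM !graph_autE.
Qed.

Canonical graph_aut_group := group graph_aut_group_set.

Lemma regular_vertex_transitive x0 :
  vertex_transitive e -> regular e #|[set y | e x0 y]|.
Proof.
move=> vt x; have [s [/graph_autP As <-]] := vt x0 x.
rewrite -(card_preimset _ (@perm_inj _ s)); apply: eq_card => y.
by rewrite !inE graph_autE.
Qed.

Lemma clique_edge S x y : clique e S -> x \in S -> y \in S -> x != y -> e x y.
Proof.
move=> /forall_inP/(_ x) cl xS yS.
by move: (cl xS) => /forall_inP/(_ y yS)/implyP.
Qed.

Lemma independent_nonedge S x y : independent e S -> x \in S -> y \in S -> e x y = false.
Proof.
move=> /forall_inP/(_ x) ind xS yS; apply/negbTE.
by move: (ind xS) => /forall_inP; apply.
Qed.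

Lemma clique_preimset_aut g S :
  g \in graph_aut -> clique e S -> clique e (g @^-1: S).
Proof.
move=> Ag clS; apply/forall_inP => x; rewrite inE => gxS.
apply/forall_inP => y; rewrite inE => gyS; apply/implyP => xy.
by rewrite -(graph_autE _ _ Ag) (clique_edge clS) // (inj_eq (@perm_inj _ g)).
Qed.

Lemma independent_clique_meet_le1 I S :
  independent e I -> clique e S -> #|I :&: S| <= 1.
Proof.
move=> indI clS; rewrite leqNgt; apply/card_gt1P => -[x [y []]].
rewrite !inE => /andP[xI xS] /andP[yI yS] xy.
by move: (clique_edge clS xS yS xy); rewrite (independent_nonedge indI).
Qed.

Lemma omega_ge2 x y : simple_graph e -> e x y -> 2 <= omega e.
Proof.
move=> [esym eirr] exy; have xy : x != y by apply: contraTneq exy => ->; rewrite eirr.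
have -> : 2 = #|[set x; y]| by rewrite cards2 xy.
apply: (bigop.bigmax_sup [set x; y]) => //.
apply/forall_inP => u; rewrite !inE => /orP[]/eqP->; apply/forall_inP => v;
  by rewrite !inE => /orP[]/eqP->; rewrite ?eqxx ?exy ?(esym y x) ?exy ?implybT.
Qed.

Lemma exists_max_clique : exists2 C, clique e C & omega e = #|C|.
Proof. by apply: bigmax_card_attained; apply/forall_inP => x; rewrite inE. Qed.

Lemma exists_max_independent : exists2 I, independent e I & alpha e = #|I|.
Proof. by apply: bigmax_card_attained; apply/forall_inP => x; rewrite inE. Qed.

End GraphAutomorphisms.

Section CliqueHits.
Variables (n : nat) (e : rel 'I_n) (C : {set 'I_n}).
Hypothesis clique_C : clique e C.
Local Notation Aut := (graph_aut e).

Definition clique_hits x y : nat := \sum_(g in Aut) ((g x \in C) && (g y \in C)).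

Lemma clique_hits_aut s x y : s \in Aut -> clique_hits (s x) (s y) = clique_hits x y.
Proof.
move=> As; rewrite [RHS](reindex_inj (mulgI s)) /=.
by apply: eq_big => [g|g _]; rewrite ?groupMl // !permM.
Qed.

Lemma clique_hits_sym x y : clique_hits x y = clique_hits y x.
Proof. by apply: eq_bigr => g _; rewrite andbC. Qed.

Lemma clique_hits_nonedge x y : x != y -> ~~ e x y -> clique_hits x y = 0.
Proof.
move=> xy nexy; apply: big1 => g Ag; apply/eqP; rewrite eqb0; apply/andP => -[gxC gyC].
have := clique_edge clique_C gxC gyC; rewrite (inj_eq (@perm_inj _ g)) graph_autE //.
by rewrite (negbTE nexy) => /(_ xy).
Qed.

Lemma card_preim_perm (g : {perm 'I_n}) : #|g @^-1: C| = #|C|.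
Proof. exact: card_preimset (@perm_inj _ g). Qed.

Lemma sum_clique_hits_row x : \sum_y clique_hits x y = clique_hits x x * #|C|.
Proof.
rewrite exchange_big big_distrl /=; apply: eq_bigr => g _.
rewrite andbb -(card_preim_perm g) -sum1_card big_distrr [RHS]big_mkcond /=.
by apply: eq_bigr => y _; rewrite inE; case: (g x \in C); case: (g y \in C).
Qed.

Lemma sum_clique_hits_diag (S : {set 'I_n}) :
  \sum_(x in S) clique_hits x x = \sum_(g in Aut) #|S :&: g @^-1: C|.
Proof.
rewrite exchange_big /=; apply: eq_bigr => g _.
rewrite -sum1_card big_mkcond [RHS]big_mkcond /=; apply: eq_bigr => x _.
by rewrite !inE andbb; case: (x \in S).
Qed.

Lemma card_graph_aut_clique : #|Aut| * #|C| = \sum_x clique_hits x x.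
Proof.
rewrite (eq_bigl (mem [set: 'I_n])) => [|x]; last by rewrite !inE.
rewrite sum_clique_hits_diag -sum_nat_const; apply: eq_bigr => g _.
by rewrite setTI card_preim_perm.
Qed.

Local Open Scope ring_scope.

Definition clique_indicator (g : {perm 'I_n}) : 'rV[algC]_n :=
  \row_x ((g x \in C) : nat)%:R.

Definition clique_hits_mx : 'M[algC]_n :=
  \sum_(g in Aut) (clique_indicator g)^T *m clique_indicator g.

Lemma clique_hits_mxE x y : clique_hits_mx x y = (clique_hits x y)%:R.
Proof.
rewrite summxE natr_sum; apply: eq_bigr => g _.
by rewrite mxE big_ord1 !mxE -natrM mulnb.
Qed.

Lemma herm_form_clique_hits_mx_ge0 v : 0 <= herm_form clique_hits_mx v.
Proof.
rewrite herm_form_sum; apply: sumr_ge0 => g _; apply: herm_form_gram_ge0.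
by apply/rowP => x; rewrite !mxE conjC_nat.
Qed.

Lemma mul_clique_hits_mx_eq0 (w : 'rV_n) :
  (forall g, g \in Aut -> \sum_x w 0 x * ((g x \in C) : nat)%:R = 0) ->
  w *m clique_hits_mx = 0.
Proof.
move=> w_perp; rewrite mulmx_sumr big1 // => g Ag; rewrite mulmxA.
have -> : w *m (clique_indicator g)^T = 0.
  apply/rowP => i; rewrite ord1 !mxE -[RHS](w_perp g Ag).
  by apply: eq_bigr => x _; rewrite !mxE.
by rewrite mul0mx.
Qed.

End CliqueHits.

Section TransitiveGraph.
Variables (n : nat) (e : rel 'I_n).
Hypothesis irr_e : irreflexive e.
Hypotheses (vt_e : vertex_transitive e) (et_e : edge_transitive e).
Variables (x0 y0 : 'I_n) (C I : {set 'I_n}).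
Hypothesis e_x0y0 : e x0 y0.
Hypotheses (clique_C : clique e C) (indep_I : independent e I).
Hypothesis C_gt1 : 1 < #|C|.
Hypothesis card_IC : #|I| * #|C| = n.

Local Notation hits := (clique_hits e C).
Local Notation d := (hits x0 x0).
Local Notation c := (hits x0 y0).
Local Notation k := #|[set y | e x0 y]|.

Lemma clique_hits_diag x : hits x x = d.
Proof. by have [s [/graph_autP As <-]] := vt_e x0 x; rewrite clique_hits_aut. Qed.

Lemma clique_hits_edge x y : e x y -> hits x y = c.
Proof.
move=> exy; have [s [/graph_autP As [[<- <-]|[<- <-]]]] := et_e e_x0y0 exy.
  by rewrite clique_hits_aut.
by rewrite clique_hits_aut // clique_hits_sym.
Qed.

Lemma clique_hits_edge_gt0 : 0 < c.
Proof.
have [p [q [pC qC pq]]] := card_gt1P C_gt1.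
have [s [/graph_autP As sx0y0]] := et_e e_x0y0 (clique_edge clique_C pC qC pq).
rewrite /clique_hits (bigD1 s) //=; case: sx0y0 => -[-> ->]; by rewrite pC qC.
Qed.

Lemma clique_hitsE x y : hits x y = (x == y) * d + e x y * c.
Proof.
have [<-|xy] := eqVneq x y.
  by rewrite clique_hits_diag irr_e mul1n mul0n addn0.
case exy: (e x y); first by rewrite clique_hits_edge // mul0n mul1n.
by rewrite clique_hits_nonedge ?exy // !mul0n.
Qed.

Lemma clique_hits_mx_adj :
  clique_hits_mx e C = ((d%:R)%:M + (c%:R : algC) *: adj_mx e)%R.
Proof.
apply/matrixP => x y; rewrite clique_hits_mxE clique_hitsE !mxE.
by rewrite natrD !natrM mulr_natl [(_ * c%:R)%R]mulrC.
Qed.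

Lemma degree_clique_hits : d * #|C| = d + k * c.
Proof.
rewrite -sum_clique_hits_row; under eq_bigr do rewrite clique_hitsE.
rewrite big_split /= -!big_distrl /= (bigD1 x0) //= eqxx big1 => [|y /negbTE].
  rewrite addn0 mul1n -sum1_card [in RHS]big_mkcond /=; congr (_ + _ * _).
  by apply: eq_bigr => y _; rewrite inE; case: (e x0 y).
by rewrite eq_sym => ->.
Qed.

Lemma card_independent_preim_clique g : g \in graph_aut e -> #|I :&: g @^-1: C| = 1.
Proof.
have meet_le1 h : h \in graph_aut e -> #|I :&: h @^-1: C| <= 1.
  by move=> Ah; apply: independent_clique_meet_le1 (clique_preimset_aut Ah clique_C).
have sum_meets : \sum_(h in graph_aut e) #|I :&: h @^-1: C| = \sum_(h in graph_aut e) 1.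
  rewrite -sum_clique_hits_diag sum1_card; under eq_bigr do rewrite clique_hits_diag.
  rewrite sum_nat_const; apply/eqP; rewrite -(eqn_pmul2r (ltnW C_gt1)) card_graph_aut_clique.
  under eq_bigr do rewrite clique_hits_diag.
  by rewrite sum_nat_const card_ord mulnAC card_IC.
have [_] := leqif_sum (fun h Ah => leqif_eq (meet_le1 h Ah)).
by rewrite sum_meets eqxx => /esym/forall_inP meets1 Ag; apply/eqP/meets1.
Qed.

Local Open Scope ring_scope.

Definition clique_independent_vec : 'rV[algC]_n := \row_x (#|C|%:R * (x \in I)%:R - 1).

Lemma mul_clique_independent_vec_hits_mx :
  clique_independent_vec *m clique_hits_mx e C = 0.
Proof.
apply: mul_clique_hits_mx_eq0 => g Ag.
under eq_bigr do rewrite mxE mulrBl mul1r -mulrA -natrM mulnb.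
rewrite sumrB -mulr_sumr -!natr_sum.
have -> : \sum_x ((x \in I) && (g x \in C) : nat) = #|I :&: g @^-1: C|.
  by rewrite -sum_nat_mem; apply: eq_bigr => x _; rewrite !inE.
have -> : \sum_x ((g x \in C) : nat) = #|C|.
  by rewrite -(card_preim_perm C g) -sum_nat_mem; apply: eq_bigr => x _; rewrite !inE.
by rewrite card_independent_preim_clique // mulr1 subrr.
Qed.

Lemma clique_independent_vec_neq0 : clique_independent_vec != 0.
Proof.
have [x1 x1I] : exists x1, x1 \notin I.
  case x0I: (x0 \in I); last by exists x0; rewrite x0I.
  exists y0; apply/negP => y0I.
  by move: e_x0y0; rewrite (independent_nonedge indep_I x0I y0I).
apply/eqP => /rowP/(_ x1)/eqP; rewrite !mxE (negbTE x1I) mulr0 sub0r oppr_eq0.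
by rewrite oner_eq0.
Qed.

Lemma smallest_eigenvalue_adj_hits :
  smallest_eigenvalue (adj_mx e) (- d%:R / c%:R).
Proof.
split.
  apply: eigenvalue_of_kernel clique_independent_vec_neq0 _.
    by rewrite pnatr_eq0 -lt0n clique_hits_edge_gt0.
  by rewrite -clique_hits_mx_adj mul_clique_independent_vec_hits_mx.
move=> m; apply: eigenvalue_ge_psd; first by rewrite ltr0n clique_hits_edge_gt0.
by move=> v; rewrite -clique_hits_mx_adj herm_form_clique_hits_mx_ge0.
Qed.

Lemma smallest_eigenvalue_adj_degree :
  smallest_eigenvalue (adj_mx e) (- k%:R / (#|C|%:R - 1)).
Proof.
have dk : (d * (#|C| - 1) = k * c)%N by rewrite mulnBr muln1 degree_clique_hits addKn.
have C1 : #|C|%:R - 1 = (#|C| - 1)%:R :> algC by rewrite natrB 1?ltnW.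
suff -> : - k%:R / (#|C|%:R - 1) = - d%:R / c%:R :> algC.
  exact: smallest_eigenvalue_adj_hits.
rewrite !mulNr; congr (- _); apply/eqP.
rewrite C1 eqr_div ?pnatr_eq0 -?lt0n ?subn_gt0 ?clique_hits_edge_gt0 //.
by rewrite -!natrM dk mulnC.
Qed.

End TransitiveGraph.

Theorem mainTheorem9 (n : nat) (e : rel 'I_n) :
  simple_graph e -> has_edge e ->
  vertex_transitive e -> edge_transitive e ->
  alpha e * omega e = n ->
  exists k : nat, regular e k /\
    smallest_eigenvalue (adj_mx e)
      (- (k%:R : algC) / ((omega e)%:R - 1))%R.
Proof.
move=> simple_e [x0 [y0 e_x0y0]] vt_e et_e card_alpha_omega.
have [C clique_C omegaE] := exists_max_clique e.
have [I indep_I alphaE] := exists_max_independent e.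
have C_gt1 : 1 < #|C| by rewrite -omegaE (omega_ge2 simple_e e_x0y0).
exists #|[set y | e x0 y]|; split; first exact: regular_vertex_transitive.
rewrite omegaE; apply: (smallest_eigenvalue_adj_degree simple_e.2 vt_e et_e e_x0y0
  clique_C indep_I C_gt1).
by rewrite -alphaE -omegaE.
Qed.
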